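(* Let $\Omega\subset\mathbb{S}^m$ be a domain and $\rho\in C^1(\Omega)$. If the associated map $\phi^{\rho}:\Omega\to\mathbb{H}^{m+1}$ is proper, then for every $t\in\mathbb{R}$ the map $\phi_t:=\phi^{\rho+t}:\Omega\to\mathbb{H}^{m+1}$ (associated to $\rho+t$, i.e. to the dilated metric $e^{2t}e^{2\rho}g_0$) is also proper.
   Context: $\mathbb{S}^m\subset\mathbb{R}^{m+1}$ is the unit sphere with round metric $g_0$; $\nabla$ and $|\cdot|$ denote gradient and norm with respect to $g_0$. Let $\mathbb{L}^{m+2}$ be $\mathbb{R}^{m+2}$ with $\langle\!\langle x,y\rangle\!\rangle=-x_0y_0+\sum_{i=1}^{m+1}x_iy_i$, and $\mathbb{H}^{m+1}=\{x:\langle\!\langle x,x\rangle\!\rangle=-1,\ x_0>0\}$. For $\rho\in C^1(\Omega)$ the associated map $\phi^\rho:\Omega\to\mathbb{H}^{m+1}$ is $$\phi^\rho(x)=\frac{e^{\rho(x)}}{2}\Big(1+e^{-2\rho(x)}\big(1+|\nabla\rho(x)|^2\big)\Big)(1,x)+e^{-\rho(x)}\big(0,-x+\nabla\rho(x)\big).$$ (Equivalently $\phi^{\rho+t}=\cosh(t)\phi^\rho-\sinh(t)\eta$ with $\eta=\phi^\rho-e^{\rho}(1,x)$; this family is the parallel flow.) Proper means preimages of compact sets are compact. *)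

From Stdlib Require Import Reals List.
Open Scope R_scope.

(* Points of R^n are represented as  nat -> R  whose coordinates with index >= n vanish. *)
Definition Vec := nat -> R.

Definition in_Rn (n : nat) (x : Vec) : Prop := forall i, (n <= i)%nat -> x i = 0.

(* Euclidean inner product / norm / distance on the first n coordinates
   (indices 0 .. n-1). *)
Definition dotn (n : nat) (x y : Vec) : R :=
  match n with O => 0 | S k => sum_f_R0 (fun i => x i * y i) k end.
Definition normn (n : nat) (x : Vec) : R := sqrt (dotn n x x).
Definition distn (n : nat) (x y : Vec) : R := normn n (fun i => x i - y i).

Definition openn (n : nat) (U : Vec -> Prop) : Prop :=
  forall x, U x -> exists r, 0 < r /\ forall y, distn n x y < r -> U y.

Definition compactn (n : nat) (K : Vec -> Prop) : Prop :=
  forall (I : Type) (U : I -> Vec -> Prop),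
    (forall i, openn n (U i)) ->
    (forall x, K x -> exists i, U i x) ->
    exists l : list I, forall x, K x -> exists i, In i l /\ U i x.

Definition sphere (m : nat) (x : Vec) : Prop :=
  in_Rn (S m) x /\ dotn (S m) x x = 1.

(* Hyperbolic space H^(m+1) in Minkowski space L^(m+2); coordinate 0 is x_0. *)
Definition lor (m : nat) (x y : Vec) : R :=
  - (x 0%nat * y 0%nat) + sum_f_R0 (fun i => x (S i) * y (S i)) m.
Definition hyp (m : nat) (x : Vec) : Prop :=
  in_Rn (S (S m)) x /\ lor m x x = -1 /\ 0 < x 0%nat.

Definition rel_open_sphere (m : nat) (O : Vec -> Prop) : Prop :=
  forall x, O x -> exists r, 0 < r /\
    forall y, sphere m y -> distn (S m) x y < r -> O y.

Definition connected_in (n : nat) (O : Vec -> Prop) : Prop :=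
  forall U V, openn n U -> openn n V ->
    (forall x, O x -> U x \/ V x) ->
    (forall x, O x -> U x -> V x -> False) ->
    (forall x, O x -> U x) \/ (forall x, O x -> V x).

Definition sphere_domain (m : nat) (O : Vec -> Prop) : Prop :=
  (forall x, O x -> sphere m x) /\ (exists x, O x) /\
  rel_open_sphere m O /\ connected_in (S m) O.

Definition is_gradient_on (m : nat) (O : Vec -> Prop) (rho : Vec -> R) (g : Vec -> Vec) : Prop :=
  forall x, O x ->
    in_Rn (S m) (g x) /\ dotn (S m) x (g x) = 0 /\
    forall eps, 0 < eps -> exists delta, 0 < delta /\
      forall y, O y -> distn (S m) y x < delta ->
        Rabs (rho y - rho x - dotn (S m) (g x) (fun i => y i - x i))
          <= eps * distn (S m) y x.

Definition continuous_on_vec (m : nat) (O : Vec -> Prop) (g : Vec -> Vec) : Prop :=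
  forall x, O x -> forall eps, 0 < eps -> exists delta, 0 < delta /\
    forall y, O y -> distn (S m) y x < delta -> distn (S m) (g y) (g x) < eps.

Definition C1_on (m : nat) (O : Vec -> Prop) (rho : Vec -> R) (g : Vec -> Vec) : Prop :=
  is_gradient_on m O rho g /\ continuous_on_vec m O g.

Definition phi_map (m : nat) (rho : Vec -> R) (g : Vec -> Vec) (x : Vec) : Vec :=
  let a := exp (rho x) / 2 * (1 + exp (-2 * rho x) * (1 + dotn (S m) (g x) (g x))) in
  fun i => match i with
           | O => a
           | S k => if Nat.leb k m
                    then a * x k + exp (- rho x) * (- x k + g x k)
                    else 0
           end.

Definition proper_map (m : nat) (O : Vec -> Prop) (f : Vec -> Vec) : Prop :=
  forall K : Vec -> Prop, (forall z, K z -> hyp m z) -> compactn (S (S m)) K ->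
    compactn (S m) (fun x => O x /\ K (f x)).

(* Since rho and rho + t differ by a constant, their tangent gradients agree on the
   relatively open domain (a nonzero tangent difference v would be detected by moving from x
   along the great circle in direction v).  Hence phi_t and phi^rho are built from the same
   gradient, and their time coordinates compare as
     phi^rho_0 = (e^rho + (1 + |grad rho|^2) e^-rho) / 2 <= (e^t + e^-t) phi_t,0.
   A compact K in H^(m+1) has bounded time coordinate, so phi_t^-1(K) lies in the preimage
   under phi^rho of a sublevel set {z in H^(m+1) : z_0 <= M}, which is closed and bounded,
   hence compact; this preimage is compact by properness of phi^rho, and phi_t^-1(K) is a
   closed subset of it because phi_t is continuous and K is closed. *)

From Stdlib Require Import Reals List Lra Lia Psatz.
From Stdlib Require Import Classical FunctionalExtensionality ClassicalEpsilon.
From Coquelicot Require Compactness.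
Open Scope R_scope.

Lemma Rabs_le_inv a b : Rabs a <= b -> - b <= a <= b.
Proof. unfold Rabs; destruct Rcase_abs; intros; lra. Qed.

Lemma sqrt_le_sq a b : 0 <= b -> a <= b * b -> sqrt a <= b.
Proof. intros. rewrite <- (sqrt_square b) by auto. apply sqrt_le_1_alt; auto. Qed.

Lemma sqrt_lt_sq a b : 0 <= a -> 0 <= b -> a < b * b -> sqrt a < b.
Proof. intros. rewrite <- (sqrt_square b) by auto. apply sqrt_lt_1_alt; auto. Qed.

Lemma le_sqrt_sq a b : 0 <= a -> a * a <= b -> a <= sqrt b.
Proof. intros. rewrite <- (sqrt_square a) by auto. apply sqrt_le_1_alt; auto. Qed.

Lemma dotn_S n x y : dotn (S n) x y = dotn n x y + x n * y n.
Proof. destruct n; simpl; ring. Qed.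

Lemma dotn_ext n x y x' y' :
  (forall i, (i < n)%nat -> x i * y i = x' i * y' i) -> dotn n x y = dotn n x' y'.
Proof. induction n; intros H; [reflexivity|]. rewrite !dotn_S, IHn, H; auto; lia. Qed.

Lemma dotn_comm n x y : dotn n x y = dotn n y x.
Proof. apply dotn_ext; intros; ring. Qed.

Lemma dotn_linl n a b x y z :
  dotn n (fun i => a * x i + b * y i) z = a * dotn n x z + b * dotn n y z.
Proof. induction n; [simpl; ring|]. rewrite !dotn_S, IHn; ring. Qed.

Lemma dotn_linr n a b x y z :
  dotn n z (fun i => a * x i + b * y i) = a * dotn n z x + b * dotn n z y.
Proof. rewrite dotn_comm, dotn_linl, !(dotn_comm n z). reflexivity. Qed.

Lemma dotn_lin2 n a b c d x y :
  dotn n (fun i => a * x i + b * y i) (fun i => c * x i + d * y i) =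
  a * c * dotn n x x + (a * d + b * c) * dotn n x y + b * d * dotn n y y.
Proof. induction n; [simpl; ring|]. rewrite !dotn_S, IHn; ring. Qed.

Lemma dotn_nonneg n x : 0 <= dotn n x x.
Proof. induction n; [simpl; lra|]. rewrite dotn_S. nra. Qed.

Lemma dotn_coord n x i : (i < n)%nat -> x i * x i <= dotn n x x.
Proof.
  induction n; intros Hi; [lia|]. rewrite dotn_S.
  destruct (Nat.eq_dec i n) as [->|Hn].
  - pose proof (dotn_nonneg n x); lra.
  - assert (IH : x i * x i <= dotn n x x) by (apply IHn; lia). nra.
Qed.

Lemma dotn_eq0 n x : dotn n x x = 0 -> forall i, (i < n)%nat -> x i = 0.
Proof. intros H i Hi. pose proof (dotn_coord n x i Hi). nra. Qed.

Lemma dotn_CS n x y : dotn n x y * dotn n x y <= dotn n x x * dotn n y y.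
Proof.
  destruct (Req_dec (dotn n y y) 0) as [Hy|Hy].
  - assert (Hxy : dotn n x y = 0).
    { rewrite (dotn_ext n x y x (fun i => 0 * y i + 0 * y i)).
      + rewrite dotn_linr. ring.
      + intros i Hi. rewrite (dotn_eq0 n y Hy i Hi). ring. }
    rewrite Hxy, Hy. lra.
  - (* expand [0 <= |<y,y> x - <x,y> y|^2 = <y,y> (<x,x><y,y> - <x,y>^2)] *)
    pose proof (dotn_nonneg n (fun i => dotn n y y * x i + (- dotn n x y) * y i)) as H.
    rewrite dotn_lin2 in H. pose proof (dotn_nonneg n y). nra.
Qed.

Lemma normn_nonneg n x : 0 <= normn n x.
Proof. apply sqrt_pos. Qed.

Lemma normn_sq n x : normn n x * normn n x = dotn n x x.
Proof. apply sqrt_sqrt, dotn_nonneg. Qed.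

Lemma dotn_abs n x y : Rabs (dotn n x y) <= normn n x * normn n y.
Proof.
  pose proof (dotn_CS n x y). pose proof (normn_sq n x). pose proof (normn_sq n y).
  pose proof (normn_nonneg n x). pose proof (normn_nonneg n y).
  apply Rsqr_incr_0_var; [|nra]. rewrite <- Rsqr_abs. unfold Rsqr. nra.
Qed.

Lemma normn_triangle n x y : normn n (fun i => x i + y i) <= normn n x + normn n y.
Proof.
  pose proof (normn_nonneg n x). pose proof (normn_nonneg n y).
  apply sqrt_le_sq; [lra|].
  rewrite (dotn_ext n _ _ (fun i => 1 * x i + 1 * y i) (fun i => 1 * x i + 1 * y i))
    by (intros; ring).
  rewrite dotn_lin2. pose proof (dotn_abs n x y). pose proof (Rle_abs (dotn n x y)).
  pose proof (normn_sq n x). pose proof (normn_sq n y). nra.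
Qed.

Lemma distn_triangle n x y z : distn n x z <= distn n x y + distn n y z.
Proof.
  unfold distn. replace (fun i => x i - z i) with (fun i => (x i - y i) + (y i - z i))
    by (apply functional_extensionality; intros; ring).
  apply (normn_triangle n (fun i => x i - y i) (fun i => y i - z i)).
Qed.

Lemma distn_sym n x y : distn n x y = distn n y x.
Proof. unfold distn, normn. f_equal. apply dotn_ext. intros; ring. Qed.

Lemma distn_self n x : distn n x x = 0.
Proof.
  unfold distn, normn.
  rewrite (dotn_ext n _ _ (fun i => 0 * x i + 0 * x i) (fun i => 0 * x i + 0 * x i))
    by (intros; ring).
  rewrite dotn_lin2. replace (0 * 0 * dotn n x x + _ + _) with 0 by ring. apply sqrt_0.
Qed.

Lemma distn_nonneg n x y : 0 <= distn n x y.
Proof. apply normn_nonneg. Qed.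

Lemma distn_eq0 n x y : in_Rn n x -> in_Rn n y -> distn n x y = 0 -> x = y.
Proof.
  intros Hx Hy H. apply sqrt_eq_0 in H; [|apply dotn_nonneg].
  apply functional_extensionality. intros i.
  destruct (Nat.lt_ge_cases i n) as [Hi|Hi].
  - pose proof (dotn_eq0 _ _ H i Hi). cbv beta in *. lra.
  - rewrite Hx, Hy by auto. reflexivity.
Qed.

Lemma coord_le_normn n x i : (i < n)%nat -> Rabs (x i) <= normn n x.
Proof.
  intros H. apply le_sqrt_sq; [apply Rabs_pos|]. rewrite <- Rabs_mult, Rabs_right.
  - apply dotn_coord; auto.
  - apply Rle_ge. nra.
Qed.

Lemma coord_le_distn n x y i : (i < n)%nat -> Rabs (x i - y i) <= distn n x y.
Proof. apply (coord_le_normn n (fun i => x i - y i)). Qed.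

Lemma normn_lipschitz n x y : Rabs (normn n x - normn n y) <= distn n x y.
Proof.
  assert (H1 : normn n x <= normn n y + distn n x y).
  { unfold distn. replace x with (fun i => y i + (x i - y i)) at 1
      by (apply functional_extensionality; intros; ring). apply normn_triangle. }
  assert (H2 : normn n y <= normn n x + distn n x y).
  { rewrite distn_sym. unfold distn. replace y with (fun i => x i + (y i - x i)) at 1
      by (apply functional_extensionality; intros; ring). apply normn_triangle. }
  apply Rabs_le. lra.
Qed.

Lemma dotn_le_of_coords n x d : (forall i, (i < n)%nat -> Rabs (x i) <= d) ->
  dotn n x x <= INR n * (d * d).
Proof.
  induction n; intros H; [simpl; lra|]. rewrite dotn_S, S_INR.
  assert (IH : dotn n x x <= INR n * (d * d)) by (apply IHn; auto).
  assert (Hn : Rabs (x n) <= d) by (apply H; lia).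
  apply Rabs_le_inv in Hn. nra.
Qed.

Lemma distn_lt_of_coords n x y r : 0 < r ->
  (forall i, (i < n)%nat -> Rabs (x i - y i) <= r / (INR n + 1)) -> distn n x y < r.
Proof.
  intros Hr H. set (d := r / (INR n + 1)) in H.
  assert (Hn : 0 <= INR n) by apply pos_INR.
  assert (Hd : 0 < d) by (apply Rdiv_lt_0_compat; lra).
  assert (Hr' : r = d * (INR n + 1)) by (unfold d; field; lra).
  pose proof (dotn_le_of_coords n (fun i => x i - y i) d H).
  apply sqrt_lt_sq; [apply dotn_nonneg|lra|]. nra.
Qed.

Definition rel_closed (n : nat) (B A : Vec -> Prop) : Prop :=
  forall x, B x -> ~ A x -> exists r, 0 < r /\ forall y, distn n x y < r -> ~ A y.

Definition cube (n : nat) (M : R) (x : Vec) : Prop :=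
  in_Rn n x /\ forall i, (i < n)%nat -> Rabs (x i) <= M.

Lemma compact_ext n A B : (forall x, A x <-> B x) -> compactn n A -> compactn n B.
Proof.
  intros HAB HA I U HU Hcov. destruct (HA I U HU) as [l Hl].
  - intros x Ax. apply Hcov, HAB, Ax.
  - exists l. intros x Bx. apply Hl, HAB, Bx.
Qed.

Lemma closed_subset n A B : compactn n B -> (forall x, A x -> B x) -> rel_closed n B A ->
  compactn n A.
Proof.
  intros HB HAB HC I U HU Hcov.
  (* cover B by the U i together with the open set of points having a ball that misses A *)
  pose (V := fun y => exists x r, 0 < r /\ (forall z, distn n x z < r -> ~ A z) /\ distn n x y < r).
  destruct (HB (option I) (fun o => match o with Some i => U i | None => V end)) as [l Hl].
  - intros [i|]; auto. intros y [x [r [Hr [Hr' Hy]]]]. exists (r - distn n x y). split; [lra|].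
    intros z Hz. exists x, r. split; auto. split; auto. pose proof (distn_triangle n x y z). lra.
  - intros x Bx. destruct (classic (A x)) as [Ax|Ax].
    + destruct (Hcov x Ax) as [i Hi]. exists (Some i). auto.
    + destruct (HC x Bx Ax) as [r [Hr Hr']]. exists None. exists x, r. rewrite distn_self. auto.
  - exists (flat_map (fun o => match o with Some i => i :: nil | None => nil end) l).
    intros x Ax. destruct (Hl x (HAB x Ax)) as [[i|] [Ho Hx]].
    + exists i. split; auto. apply in_flat_map. exists (Some i). split; auto. left; auto.
    + exfalso. destruct Hx as [x0 [r [Hr [Hr' Hy]]]]. exact (Hr' x Hy Ax).
Qed.

Lemma compact_nested n K (U : nat -> Vec -> Prop) : compactn n K ->
  (forall k, openn n (U k)) -> (forall k k' y, (k <= k')%nat -> U k y -> U k' y) ->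
  (forall z, K z -> exists k, U k z) -> exists N, forall z, K z -> U N z.
Proof.
  intros HK HU Hmono Hcov. destruct (HK nat U HU Hcov) as [l Hl].
  exists (list_max l). intros z Kz. destruct (Hl z Kz) as [k [Hk Hkz]].
  apply (Hmono k); auto.
  pose proof (proj1 (list_max_le l (list_max l)) (le_n _)) as Hmax.
  rewrite Forall_forall in Hmax. auto.
Qed.

Lemma compact_bounded n K : compactn n K -> exists M, forall z, K z -> normn n z <= M.
Proof.
  intros HK. destruct (compact_nested n K (fun k y => normn n y < INR k) HK) as [N HN].
  - intros k y Hy. exists (INR k - normn n y). split; [lra|]. intros z Hz.
    pose proof (normn_lipschitz n z y). rewrite distn_sym in Hz. apply Rabs_le_inv in H. lra.
  - intros k k' y Hk Hy. apply le_INR in Hk. lra.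
  - intros z _. destruct (INR_unbounded (normn n z)) as [k Hk]. exists k. lra.
  - exists (INR N). intros z Kz. left. auto.
Qed.

Lemma compact_closed n K : (forall z, K z -> in_Rn n z) -> compactn n K ->
  rel_closed n (in_Rn n) K.
Proof.
  intros HKR HK w Hw Kw.
  destruct (compact_nested n K (fun k y => / INR (S k) < distn n w y) HK) as [N HN].
  - intros k y Hy. exists (distn n w y - / INR (S k)). split; [lra|]. intros z Hz.
    pose proof (distn_triangle n w z y). rewrite (distn_sym n z y) in H. lra.
  - intros k k' y Hk Hy. apply (Rle_lt_trans _ (/ INR (S k))); auto.
    apply Rinv_le_contravar; [apply lt_0_INR; lia|apply le_INR; lia].
  - intros z Kz.
    assert (Hd : 0 < distn n w z).
    { destruct (distn_nonneg n w z) as [Hd|Hd]; auto. exfalso. apply Kw.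
      rewrite (distn_eq0 n w z Hw (HKR z Kz)); auto. }
    destruct (archimed_cor1 _ Hd) as [k [Hk Hk0]]. exists k.
    apply (Rle_lt_trans _ (/ INR k)); auto.
    apply Rinv_le_contravar; [apply lt_0_INR; lia|apply le_INR; lia].
  - exists (/ INR (S N)). split; [apply Rinv_0_lt_compat, lt_0_INR; lia|].
    intros y Hy Ky. specialize (HN y Ky). lra.
Qed.

Fixpoint vec_of_tn (n : nat) : Compactness.Tn n R -> Vec :=
  match n with
  | O => fun _ _ => 0
  | S k => fun v i => match i with O => fst v | S j => vec_of_tn k (snd v) j end
  end.

Fixpoint tn_of_vec (n : nat) (x : Vec) : Compactness.Tn n R :=
  match n with
  | O => tt
  | S k => (x O, tn_of_vec k (fun j => x (S j)))
  end.

Fixpoint tn_const (n : nat) (c : R) : Compactness.Tn n R :=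
  match n with O => tt | S k => (c, tn_const k c) end.

Lemma vec_of_tn_of_vec n x i : (i < n)%nat -> vec_of_tn n (tn_of_vec n x) i = x i.
Proof.
  revert x i; induction n; intros x i H; [lia|]. destruct i; simpl; auto.
  rewrite IHn; auto; lia.
Qed.

Lemma vec_of_tn_in_Rn n v : in_Rn n (vec_of_tn n v).
Proof.
  revert v; induction n; intros v i H; simpl; auto. destruct i; [lia|]. apply IHn; lia.
Qed.

Lemma cube_bounded_n n M x : cube n M x ->
  Compactness.bounded_n n (tn_const n (-M)) (tn_const n M) (tn_of_vec n x).
Proof.
  intros [_ H]. revert x H; induction n; intros x H; simpl; auto. split.
  - apply Rabs_le_inv, H. lia.
  - apply IHn. intros i Hi. apply H. lia.
Qed.

Lemma bounded_n_cube n M v :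
  Compactness.bounded_n n (tn_const n (-M)) (tn_const n M) v -> cube n M (vec_of_tn n v).
Proof.
  split; [apply vec_of_tn_in_Rn|]. revert v H; induction n as [|n IH]; intros v Hv i Hi; [lia|].
  destruct v as [v1 v2], Hv as [Hv1 Hv2]. destruct i; simpl.
  - apply Rabs_le. lra.
  - apply IH; auto. lia.
Qed.

Lemma close_n_coords n d v w : Compactness.close_n n d v w ->
  forall i, (i < n)%nat -> Rabs (vec_of_tn n v i - vec_of_tn n w i) < d.
Proof.
  revert v w; induction n; intros v w H i Hi; [lia|]. destruct v as [v1 v2], w as [w1 w2].
  destruct H as [H1 H2]. destruct i; simpl; auto. apply IHn; auto; lia.
Qed.

Lemma cube_compact n M : compactn n (cube n M).
Proof.
  intros I U HU Hcov.
  destruct (classic (exists x0, cube n M x0)) as [[x0 Hx0]|Hempty].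
  2:{ exists nil. intros x Hx. exfalso. eauto. }
  destruct (Hcov x0 Hx0) as [i0 _].
  assert (HN : 0 < INR n + 1) by (pose proof (pos_INR n); lra).
  assert (Hgauge : forall t, exists p : posreal * I, cube n M (vec_of_tn n t) ->
    forall y, distn n (vec_of_tn n t) y < fst p -> U (snd p) y).
  { intros t. destruct (classic (cube n M (vec_of_tn n t))) as [Ht|Ht].
    - destruct (Hcov _ Ht) as [i Hi]. destruct (HU i _ Hi) as [r [Hr Hball]].
      exists (mkposreal r Hr, i). auto.
    - exists (mkposreal 1 Rlt_0_1, i0). intros; contradiction. }
  pose (gauge t := proj1_sig (constructive_indefinite_description _ (Hgauge t))).
  assert (Hg : forall t, cube n M (vec_of_tn n t) ->
    forall y, distn n (vec_of_tn n t) y < fst (gauge t) -> U (snd (gauge t)) y)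
    by (intros t; exact (proj2_sig (constructive_indefinite_description _ (Hgauge t)))).
  pose (delta t := mkposreal (fst (gauge t) / (INR n + 1))
                     (Rdiv_lt_0_compat _ _ (cond_pos (fst (gauge t))) HN)).
  apply NNPP. intro Hnot.
  apply (Compactness.compactness_list n (tn_const n (-M)) (tn_const n M) delta).
  intros [l Hl]. apply Hnot.
  exists (map (fun t => snd (gauge t)) l). intros x Hx.
  destruct (Hl (tn_of_vec n x) (cube_bounded_n n M x Hx)) as [t [Ht [Hbt Hclose]]].
  exists (snd (gauge t)). split; [apply (in_map (fun t => snd (gauge t))); auto|].
  apply Hg; [apply bounded_n_cube; auto|].
  apply distn_lt_of_coords; [apply cond_pos|]. intros i Hi.
  pose proof (close_n_coords _ _ _ _ Hclose i Hi) as Hc.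
  rewrite vec_of_tn_of_vec in Hc by auto. rewrite Rabs_minus_sym. simpl in Hc. lra.
Qed.

Lemma heine_borel n M C : (forall x, C x -> cube n M x) -> rel_closed n (in_Rn n) C ->
  compactn n C.
Proof.
  intros Hbd Hcl. apply (closed_subset n C (cube n M)); [apply cube_compact|auto|].
  intros x [Hx _]. apply Hcl, Hx.
Qed.

Definition cont_at (n : nat) (O : Vec -> Prop) (f : Vec -> R) (x : Vec) : Prop :=
  forall eps, 0 < eps -> exists delta, 0 < delta /\
    forall y, O y -> distn n y x < delta -> Rabs (f y - f x) < eps.

Section Continuity.
Variables (n : nat) (O : Vec -> Prop) (x : Vec).

Lemma cont_ext f h : (forall y, f y = h y) -> cont_at n O f x -> cont_at n O h x.
Proof.
  intros E Hf eps He. destruct (Hf eps He) as [d [Hd Ed]]. exists d. split; auto.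
  intros. rewrite <- !E. auto.
Qed.

Lemma cont_const c : cont_at n O (fun _ => c) x.
Proof. intros eps He. exists 1. split; [lra|]. intros. rewrite Rminus_diag, Rabs_R0. auto. Qed.

Lemma cont_coord k : (k < n)%nat -> cont_at n O (fun y => y k) x.
Proof.
  intros Hk eps He. exists eps. split; auto. intros y _ Hy.
  eapply Rle_lt_trans; [apply (coord_le_distn n y x k Hk)|auto].
Qed.

Lemma cont_add f h : cont_at n O f x -> cont_at n O h x -> cont_at n O (fun y => f y + h y) x.
Proof.
  intros Hf Hh eps He. destruct (Hf (eps/2)) as [d1 [Hd1 E1]]; [lra|].
  destruct (Hh (eps/2)) as [d2 [Hd2 E2]]; [lra|].
  exists (Rmin d1 d2). split; [apply Rmin_glb_lt; auto|]. intros y Oy Hy.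
  pose proof (Rmin_l d1 d2). pose proof (Rmin_r d1 d2).
  specialize (E1 y Oy ltac:(lra)). specialize (E2 y Oy ltac:(lra)).
  replace (f y + h y - (f x + h x)) with ((f y - f x) + (h y - h x)) by ring.
  eapply Rle_lt_trans; [apply Rabs_triang|]. lra.
Qed.

Lemma cont_mul f h : cont_at n O f x -> cont_at n O h x -> cont_at n O (fun y => f y * h y) x.
Proof.
  intros Hf Hh eps He.
  set (A := Rabs (f x)). set (B := Rabs (h x)).
  assert (HA : 0 <= A) by apply Rabs_pos. assert (HB : 0 <= B) by apply Rabs_pos.
  set (eta := Rmin 1 (eps / (A + B + 1))).
  assert (Heta : 0 < eta /\ eta <= 1 /\ eta * (A + B + 1) <= eps).
  { assert (0 < eps / (A + B + 1)) by (apply Rdiv_lt_0_compat; lra).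
    split; [apply Rmin_glb_lt; lra|]. split; [apply Rmin_l|].
    apply (Rle_trans _ (eps / (A + B + 1) * (A + B + 1))); [|right; field; lra].
    apply Rmult_le_compat_r; [lra|apply Rmin_r]. }
  destruct (Hf eta) as [d1 [Hd1 E1]]; [lra|].
  destruct (Hh eta) as [d2 [Hd2 E2]]; [lra|].
  exists (Rmin d1 d2). split; [apply Rmin_glb_lt; auto|]. intros y Oy Hy.
  pose proof (Rmin_l d1 d2). pose proof (Rmin_r d1 d2).
  specialize (E1 y Oy ltac:(lra)). specialize (E2 y Oy ltac:(lra)).
  set (a := f y - f x) in *. set (b := h y - h x) in *.
  replace (f y * h y - f x * h x) with (a * b + f x * b + h x * a) by (unfold a, b; ring).
  pose proof (Rabs_triang (a * b + f x * b) (h x * a)) as T1.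
  pose proof (Rabs_triang (a * b) (f x * b)) as T2.
  rewrite !Rabs_mult in T1. rewrite !Rabs_mult in T2. fold A B in T1, T2.
  pose proof (Rabs_pos a). pose proof (Rabs_pos b).
  destruct Heta as [He1 [He2 He3]].
  assert (Rabs a * Rabs b < eta * eta) by nra.
  assert (A * Rabs b <= A * eta) by nra.
  assert (B * Rabs a <= B * eta) by nra.
  assert (eta * eta <= eta * 1) by nra.
  lra.
Qed.

Lemma cont_exp f : cont_at n O f x -> cont_at n O (fun y => exp (f y)) x.
Proof.
  intros Hf eps He.
  destruct (derivable_continuous exp derivable_exp (f x) eps He) as [alp [Ha Ea]].
  destruct (Hf alp Ha) as [d [Hd Ed]]. exists d. split; auto. intros y Oy Hy.
  destruct (Req_dec (f y) (f x)) as [E|E].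
  - rewrite E, Rminus_diag, Rabs_R0. auto.
  - apply (Ea (f y)). split; [split; [exact I|auto]|]. apply Ed; auto.
Qed.

Lemma cont_dotn k F G :
  (forall i, (i < k)%nat -> cont_at n O (fun y => F y i) x) ->
  (forall i, (i < k)%nat -> cont_at n O (fun y => G y i) x) ->
  cont_at n O (fun y => dotn k (F y) (G y)) x.
Proof.
  induction k as [|k IH]; intros HF HG.
  { apply (cont_ext (fun _ => 0)); [reflexivity|apply cont_const]. }
  apply (cont_ext (fun y => dotn k (F y) (G y) + F y k * G y k)); [intros; symmetry; apply dotn_S|].
  apply cont_add; [apply IH; auto|apply cont_mul; auto].
Qed.

Lemma cont_sign f c : cont_at n O f x -> f x <> c ->
  exists r, 0 < r /\ forall y, O y -> distn n y x < r -> 0 < (f y - c) * (f x - c).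
Proof.
  intros Hf Hc. destruct (Hf (Rabs (f x - c))) as [r [Hr Er]]; [apply Rabs_pos_lt; lra|].
  exists r. split; auto. intros y Oy Hy. specialize (Er y Oy Hy).
  apply Rabs_def2 in Er. destruct (Rlt_or_le (f x) c).
  - rewrite Rabs_left in Er by lra. nra.
  - rewrite Rabs_right in Er by lra. nra.
Qed.

Lemma cont_coords_uniform k F : (forall i, (i < k)%nat -> cont_at n O (fun y => F y i) x) ->
  forall eps, 0 < eps -> exists delta, 0 < delta /\ forall y, O y -> distn n y x < delta ->
    forall i, (i < k)%nat -> Rabs (F y i - F x i) < eps.
Proof.
  induction k as [|k IH]; intros HF eps He.
  - exists 1. split; [lra|]. intros; lia.
  - destruct (IH (fun i Hi => HF i ltac:(lia)) eps He) as [d1 [Hd1 E1]].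
    destruct (HF k ltac:(lia) eps He) as [d2 [Hd2 E2]].
    exists (Rmin d1 d2). split; [apply Rmin_glb_lt; auto|]. intros y Oy Hy i Hi.
    pose proof (Rmin_l d1 d2). pose proof (Rmin_r d1 d2).
    destruct (Nat.eq_dec i k) as [->|Hik]; [apply E2; auto; lra|apply E1; auto; [lra|lia]].
Qed.

Lemma cont_distn k F : (forall i, (i < k)%nat -> cont_at n O (fun y => F y i) x) ->
  forall eps, 0 < eps -> exists delta, 0 < delta /\ forall y, O y -> distn n y x < delta ->
    distn k (F x) (F y) < eps.
Proof.
  intros HF eps He.
  assert (HN : 0 < INR k + 1) by (pose proof (pos_INR k); lra).
  destruct (cont_coords_uniform k F HF (eps / (INR k + 1))) as [d [Hd Ed]];
    [apply Rdiv_lt_0_compat; lra|].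
  exists d. split; auto. intros y Oy Hy. apply distn_lt_of_coords; auto.
  intros i Hi. rewrite Rabs_minus_sym. left. apply Ed; auto.
Qed.

End Continuity.

Lemma gradient_cont_at m O rho g x : is_gradient_on m O rho g -> O x -> cont_at (S m) O rho x.
Proof.
  intros Hg Ox eps He. destruct (Hg x Ox) as [_ [_ D]].
  destruct (D 1) as [d [Hd Ed]]; [lra|].
  set (L := normn (S m) (g x) + 1).
  assert (HL : 1 <= L) by (pose proof (normn_nonneg (S m) (g x)); unfold L; lra).
  exists (Rmin d (eps / L)). split; [apply Rmin_glb_lt; auto; apply Rdiv_lt_0_compat; lra|].
  intros y Oy Hy. pose proof (Rmin_l d (eps / L)). pose proof (Rmin_r d (eps / L)).
  specialize (Ed y Oy ltac:(lra)).
  pose proof (dotn_abs (S m) (g x) (fun i => y i - x i)) as Hab.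
  change (normn (S m) (fun i => y i - x i)) with (distn (S m) y x) in Hab.
  pose proof (distn_nonneg (S m) y x).
  assert (Rabs (rho y - rho x) <= L * distn (S m) y x).
  { replace (rho y - rho x) with ((rho y - rho x - dotn (S m) (g x) (fun i => y i - x i))
      + dotn (S m) (g x) (fun i => y i - x i)) by ring.
    eapply Rle_trans; [apply Rabs_triang|]. unfold L. lra. }
  assert (Hlt : L * distn (S m) y x < L * (eps / L)) by (apply Rmult_lt_compat_l; lra).
  replace (L * (eps / L)) with eps in Hlt by (field; lra). lra.
Qed.

Lemma continuous_on_vec_coord m O g x k : continuous_on_vec m O g -> O x -> (k < S m)%nat ->
  cont_at (S m) O (fun y => g y k) x.
Proof.
  intros Hg Ox Hk eps He. destruct (Hg x Ox eps He) as [d [Hd Ed]]. exists d. split; auto.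
  intros y Oy Hy. eapply Rle_lt_trans; [apply (coord_le_distn (S m) (g y) (g x) k Hk)|auto].
Qed.

Lemma gradient_shift_diff m O rho t g1 g2 x :
  is_gradient_on m O rho g1 -> is_gradient_on m O (fun y => rho y + t) g2 -> O x ->
  forall eps, 0 < eps -> exists delta, 0 < delta /\
    forall y, O y -> distn (S m) y x < delta ->
      Rabs (dotn (S m) (fun i => g2 x i - g1 x i) (fun i => y i - x i))
        <= eps * distn (S m) y x.
Proof.
  intros H1 H2 Ox eps He.
  destruct (H1 x Ox) as [_ [_ D1]]. destruct (H2 x Ox) as [_ [_ D2]].
  destruct (D1 (eps / 2)) as [d1 [Hd1 E1]]; [lra|].
  destruct (D2 (eps / 2)) as [d2 [Hd2 E2]]; [lra|].
  exists (Rmin d1 d2). split; [apply Rmin_glb_lt; auto|]. intros y Oy Hy.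
  pose proof (Rmin_l d1 d2). pose proof (Rmin_r d1 d2).
  specialize (E1 y Oy ltac:(lra)). specialize (E2 y Oy ltac:(lra)).
  apply Rabs_le_inv in E1. apply Rabs_le_inv in E2.
  rewrite (dotn_ext _ _ _ (fun i => 1 * g2 x i + (-1) * g1 x i) (fun i => y i - x i))
    by (intros; ring).
  rewrite dotn_linl. apply Rabs_le. lra.
Qed.

Lemma sphere_step m x v s : sphere m x -> in_Rn (S m) v -> dotn (S m) x v = 0 ->
  0 < s -> s * s * dotn (S m) v v <= 1 ->
  exists y, sphere m y /\ distn (S m) y x <= s * normn (S m) v /\
    s * dotn (S m) v v <= 2 * dotn (S m) v (fun i => y i - x i).
Proof.
  intros [Hx Sx] Hv Hxv Hs Hsv.
  set (N2 := dotn (S m) v v) in *. assert (HN2 : 0 <= N2) by apply dotn_nonneg.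
  set (c := sqrt (1 + s * s * N2)).
  assert (Hcc : c * c = 1 + s * s * N2) by (apply sqrt_sqrt; nra).
  assert (Hc1 : 1 <= c) by (apply le_sqrt_sq; nra).
  assert (Hc2 : c <= 2) by nra.
  (* y is the normalization of x + s v, a point of the great circle through x tangent to v *)
  exists (fun i => (1 / c) * x i + (s / c) * v i). split; [split|split].
  - intros i Hi. rewrite Hx, Hv by auto. ring.
  - rewrite dotn_lin2, Sx, Hxv. fold N2.
    transitivity ((1 + s * s * N2) / (c * c)); [field; lra|]. rewrite <- Hcc. field. lra.
  - assert (Hd : dotn (S m) (fun i => (1 / c * x i + s / c * v i) - x i)
                   (fun i => (1 / c * x i + s / c * v i) - x i) = 2 * (c - 1) / c).
    { rewrite (dotn_ext _ _ _ (fun i => (1 / c - 1) * x i + (s / c) * v i)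
        (fun i => (1 / c - 1) * x i + (s / c) * v i)) by (intros; ring).
      rewrite dotn_lin2, Sx, Hxv. fold N2.
      transitivity (((1 - c) * (1 - c) + s * s * N2) / (c * c)); [field; lra|].
      replace (s * s * N2) with (c * c - 1) by lra. field. lra. }
    pose proof (normn_sq (S m) v) as HN. pose proof (normn_nonneg (S m) v). fold N2 in HN.
    unfold distn at 1, normn at 1. rewrite Hd. apply sqrt_le_sq; [nra|].
    replace (s * normn (S m) v * (s * normn (S m) v)) with (c * c - 1) by nra.
    apply (Rmult_le_reg_r c); [lra|]. unfold Rdiv. rewrite Rmult_assoc, Rinv_l by lra.
    assert (0 <= (c - 1) * (c - 1) * (c + 2)) by (apply Rmult_le_pos; nra). nra.
  - rewrite (dotn_ext _ _ _ v (fun i => (1 / c - 1) * x i + (s / c) * v i)) by (intros; ring).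
    rewrite dotn_linr, (dotn_comm _ v x), Hxv. fold N2.
    apply (Rmult_le_reg_r c); [lra|].
    replace ((1 / c - 1) * 0 + s / c * N2) with (s * N2 / c) by (field; lra).
    unfold Rdiv. rewrite !Rmult_assoc, Rinv_l by lra. nra.
Qed.

Lemma tangent_vanishes m O x v : rel_open_sphere m O -> O x -> sphere m x ->
  in_Rn (S m) v -> dotn (S m) x v = 0 ->
  (forall eps, 0 < eps -> exists delta, 0 < delta /\ forall y, O y ->
     distn (S m) y x < delta ->
     Rabs (dotn (S m) v (fun i => y i - x i)) <= eps * distn (S m) y x) ->
  forall i, v i = 0.
Proof.
  intros HO Ox Sx Hv Hxv Hsmall.
  enough (Hv0 : dotn (S m) v v = 0).
  { intros i. destruct (Nat.lt_ge_cases i (S m)) as [Hi|Hi]; [exact (dotn_eq0 _ _ Hv0 i Hi)|auto]. }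
  apply NNPP. intro Hne. pose proof (dotn_nonneg (S m) v) as Hge.
  set (N := normn (S m) v).
  assert (HNN : N * N = dotn (S m) v v) by (unfold N; apply normn_sq).
  assert (HN : 0 < N) by (assert (0 <= N) by (unfold N; apply normn_nonneg); nra).
  destruct (Hsmall (N / 4)) as [delta [Hd Hdelta]]; [lra|].
  destruct (HO x Ox) as [r [Hr Hball]].
  set (mu := Rmin (Rmin delta r) 1).
  assert (Hmu : 0 < mu /\ mu <= delta /\ mu <= r /\ mu <= 1).
  { unfold mu. pose proof (Rmin_l (Rmin delta r) 1). pose proof (Rmin_r (Rmin delta r) 1).
    pose proof (Rmin_l delta r). pose proof (Rmin_r delta r).
    split; [repeat apply Rmin_glb_lt; lra|lra]. }
  set (s := mu / (2 * N)).
  assert (HsN : s * N = mu / 2) by (unfold s; field; lra).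
  assert (Hs : 0 < s) by (unfold s; apply Rdiv_lt_0_compat; lra).
  destruct (sphere_step m x v s Sx Hv Hxv Hs) as [y [Sy [Hyx Hstep]]]; [nra|].
  fold N in Hyx.
  assert (Oy : O y) by (apply Hball; auto; rewrite distn_sym; lra).
  specialize (Hdelta y Oy ltac:(lra)). apply Rabs_le_inv in Hdelta.
  (* the step along v gains s |v|^2 / 2 but the gradient estimate only allows s |v|^2 / 4 *)
  assert (N / 4 * distn (S m) y x <= N / 4 * (s * N)) by (apply Rmult_le_compat_l; lra).
  nra.
Qed.

Lemma gradient_shift_eq m O rho t g gt : (forall x, O x -> sphere m x) -> rel_open_sphere m O ->
  is_gradient_on m O rho g -> is_gradient_on m O (fun y => rho y + t) gt ->
  forall x, O x -> gt x = g x.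
Proof.
  intros HS HO Hg Hgt x Ox.
  destruct (Hg x Ox) as [Rg [Tg _]]. destruct (Hgt x Ox) as [Rgt [Tgt _]].
  apply functional_extensionality. intros i.
  enough (Hv : forall i, gt x i - g x i = 0) by (specialize (Hv i); lra).
  apply (tangent_vanishes m O x); auto.
  - intros j Hj. rewrite Rg, Rgt by auto. ring.
  - rewrite (dotn_ext _ _ _ x (fun j => 1 * gt x j + (-1) * g x j)) by (intros; ring).
    rewrite dotn_linr, Tg, Tgt. ring.
  - apply (gradient_shift_diff m O rho t); auto.
Qed.

Lemma phi_map_0 m r g x :
  phi_map m r g x 0%nat = (exp (r x) + (1 + dotn (S m) (g x) (g x)) / exp (r x)) / 2.
Proof.
  unfold phi_map. cbn zeta. replace (-2 * r x) with (- (r x + r x)) by ring.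
  rewrite exp_Ropp, exp_plus. pose proof (exp_pos (r x)). field. lra.
Qed.

Lemma phi_map_S m r g x k : (k <= m)%nat ->
  phi_map m r g x (S k) = phi_map m r g x 0%nat * x k + exp (- r x) * (- x k + g x k).
Proof.
  intros H. unfold phi_map. cbn beta zeta iota. rewrite (proj2 (Nat.leb_le _ _) H). reflexivity.
Qed.

Lemma phi_map_in_Rn m r g x : in_Rn (S (S m)) (phi_map m r g x).
Proof.
  intros [|k] Hk; [lia|]. unfold phi_map. cbn beta zeta iota.
  rewrite (proj2 (Nat.leb_gt k m)) by lia. reflexivity.
Qed.

Lemma lor_diag m z :
  lor m z z = - (z 0%nat * z 0%nat) + dotn (S m) (fun i => z (S i)) (fun i => z (S i)).
Proof. reflexivity. Qed.

Lemma phi_map_hyp m r g x : sphere m x -> dotn (S m) x (g x) = 0 -> hyp m (phi_map m r g x).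
Proof.
  intros [Hx Sx] Tx.
  set (E := exp (r x)). set (G := dotn (S m) (g x) (g x)).
  assert (HE : 0 < E) by apply exp_pos. assert (HG : 0 <= G) by apply dotn_nonneg.
  set (a := phi_map m r g x 0%nat).
  assert (Ha : a = (E + (1 + G) / E) / 2) by apply phi_map_0.
  assert (Hb : exp (- r x) = / E) by apply exp_Ropp.
  split; [apply phi_map_in_Rn|split].
  - rewrite lor_diag. fold a.
    rewrite (dotn_ext (S m) _ _ (fun i => (a - / E) * x i + / E * g x i)
      (fun i => (a - / E) * x i + / E * g x i)).
    + rewrite dotn_lin2, Sx, Tx. fold G. rewrite Ha. field. lra.
    + intros i Hi. rewrite phi_map_S, Hb by lia. fold a. ring.
  - fold a. rewrite Ha. apply Rmult_lt_0_compat; [|lra].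
    assert (0 <= (1 + G) / E) by (apply Rmult_le_pos; [lra|apply Rlt_le, Rinv_0_lt_compat; lra]).
    lra.
Qed.

Lemma phi_map_0_shift_le m rho t g x :
  phi_map m rho g x 0%nat <= (exp t + exp (- t)) * phi_map m (fun y => rho y + t) g x 0%nat.
Proof.
  rewrite !phi_map_0, exp_plus, exp_Ropp.
  set (E := exp (rho x)). set (W := exp t). set (c := 1 + dotn (S m) (g x) (g x)).
  assert (HE : 0 < E) by apply exp_pos. assert (HW : 0 < W) by apply exp_pos.
  assert (Hc : 0 <= c) by (pose proof (dotn_nonneg (S m) (g x)); unfold c; lra).
  assert (H : 0 <= (E * W * W + c / (E * W * W)) / 2).
  { assert (0 < E * W * W) by (repeat apply Rmult_lt_0_compat; auto).
    assert (0 <= c / (E * W * W))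
      by (apply Rmult_le_pos; [lra|apply Rlt_le, Rinv_0_lt_compat; auto]).
    lra. }
  replace ((W + / W) * ((E * W + c / (E * W)) / 2))
    with ((E + c / E) / 2 + (E * W * W + c / (E * W * W)) / 2) by (field; lra).
  lra.
Qed.

Lemma phi_map_cont_at m O r g x : O x -> cont_at (S m) O r x -> continuous_on_vec m O g ->
  forall i, cont_at (S m) O (fun y => phi_map m r g y i) x.
Proof.
  intros Ox Hr Hg.
  assert (Hgi : forall k, (k < S m)%nat -> cont_at (S m) O (fun y => g y k) x)
    by (intros; apply continuous_on_vec_coord; auto).
  assert (Hexp : forall c, cont_at (S m) O (fun y => exp (c * r y)) x)
    by (intros; apply cont_exp, cont_mul; [apply cont_const|auto]).
  assert (H0 : cont_at (S m) O (fun y => phi_map m r g y 0%nat) x).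
  { apply (cont_ext _ _ _ (fun y => exp (1 * r y) / 2 * (1 + exp (-2 * r y)
      * (1 + dotn (S m) (g y) (g y))))); [intros; unfold phi_map; rewrite Rmult_1_l; reflexivity|].
    apply cont_mul; [apply cont_mul; [auto|apply cont_const]|].
    apply cont_add; [apply cont_const|]. apply cont_mul; [auto|].
    apply cont_add; [apply cont_const|]. apply cont_dotn; auto. }
  intros [|k]; auto. destruct (Compare_dec.le_lt_dec k m) as [Hk|Hk].
  - apply (cont_ext _ _ _ (fun y => phi_map m r g y 0%nat * y k
      + exp ((-1) * r y) * ((-1) * y k + g y k))).
    { intros y. rewrite phi_map_S by auto. replace (- r y) with ((-1) * r y) by ring. ring. }
    apply cont_add; [apply cont_mul; auto; apply cont_coord; lia|].
    apply cont_mul; auto.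
    apply cont_add; [apply cont_mul; [apply cont_const|apply cont_coord; lia]|].
    apply Hgi. lia.
  - apply (cont_ext _ _ _ (fun _ => 0)); [|apply cont_const].
    intros y. symmetry. apply phi_map_in_Rn. lia.
Qed.

Lemma hyp_coord_le m z i : hyp m z -> Rabs (z i) <= z 0%nat.
Proof.
  intros [Hz [Hlor Hz0]]. destruct i as [|i]; [rewrite Rabs_right; lra|].
  destruct (Nat.lt_ge_cases i (S m)) as [Hi|Hi].
  - rewrite lor_diag in Hlor.
    pose proof (dotn_coord (S m) (fun j => z (S j)) i Hi). cbv beta in H.
    apply Rabs_le. nra.
  - rewrite Hz by lia. rewrite Rabs_R0. lra.
Qed.

Lemma lor_cont_at m w : cont_at (S (S m)) (fun _ => True) (fun z => lor m z z) w.
Proof.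
  assert (Hc : forall k, (k < S (S m))%nat -> cont_at (S (S m)) (fun _ => True) (fun z => z k) w)
    by (intros; apply cont_coord; auto).
  apply (cont_ext _ _ _ (fun z => (-1) * (z 0%nat * z 0%nat)
    + dotn (S m) (fun i => z (S i)) (fun i => z (S i)))); [intros; rewrite lor_diag; ring|].
  apply cont_add; [apply cont_mul; [apply cont_const|apply cont_mul; apply Hc; lia]|].
  apply (cont_dotn _ _ _ _ (fun z i => z (S i)) (fun z i => z (S i))); intros i Hi; apply Hc; lia.
Qed.

Lemma hyp_sublevel_compact m M : compactn (S (S m)) (fun z => hyp m z /\ z 0%nat <= M).
Proof.
  apply (heine_borel _ M).
  { intros z [Hz HM]. split; [apply Hz|]. intros i _. pose proof (hyp_coord_le m z i Hz). lra. }
  intros w Hwin Hw.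
  destruct (Req_dec (lor m w w) (-1)) as [Hl|Hl].
  - (* on the two-sheeted hyperboloid, w lies on the wrong sheet or above the level M *)
    assert (Hw0 : w 0%nat <> 0).
    { intro H0. rewrite lor_diag, H0 in Hl.
      pose proof (dotn_nonneg (S m) (fun i => w (S i))). lra. }
    assert (Hc0 := cont_coord (S (S m)) (fun _ => True) w 0 ltac:(lia)).
    destruct (Rlt_or_le (w 0%nat) 0) as [Hneg|Hpos].
    + destruct (cont_sign _ _ _ _ 0 Hc0 ltac:(lra)) as [r [Hr Hsgn]].
      exists r. split; auto. intros y Hy [[_ [_ Hy0]] _].
      specialize (Hsgn y I ltac:(rewrite distn_sym; auto)). cbv beta in Hsgn. nra.
    + assert (HM : M < w 0%nat).
      { apply Rnot_le_lt. intro. apply Hw. repeat split; auto. lra. }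
      destruct (cont_sign _ _ _ _ M Hc0 ltac:(lra)) as [r [Hr Hsgn]].
      exists r. split; auto. intros y Hy [_ HyM].
      specialize (Hsgn y I ltac:(rewrite distn_sym; auto)). cbv beta in Hsgn. nra.
  - destruct (cont_sign _ _ _ _ (-1) (lor_cont_at m w) Hl) as [r [Hr Hsgn]].
    exists r. split; auto. intros y Hy [[_ [Hy1 _]] _].
    specialize (Hsgn y I ltac:(rewrite distn_sym; auto)). cbv beta in Hsgn.
    rewrite Hy1 in Hsgn. lra.
Qed.

Lemma preimage_rel_closed n k O B F K : (forall x, B x -> O x) ->
  (forall x, O x -> forall i, cont_at n O (fun y => F y i) x) ->
  (forall x, in_Rn k (F x)) -> (forall z, K z -> in_Rn k z) -> compactn k K ->
  rel_closed n B (fun x => O x /\ K (F x)).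
Proof.
  intros HBO HF HFR HKR HK x Bx Hx.
  assert (Ox : O x) by auto.
  destruct (compact_closed k K HKR HK (F x) (HFR x) ltac:(tauto)) as [r [Hr Hball]].
  destruct (cont_distn n O x k F (fun i _ => HF x Ox i) r Hr) as [d [Hd Hdist]].
  exists d. split; auto. intros y Hy [Oy Ky].
  apply (Hball (F y)); auto. apply Hdist; auto. rewrite distn_sym. auto.
Qed.

Theorem mainTheorem4 (m : nat) (Omega : Vec -> Prop) (rho : Vec -> R) (g : Vec -> Vec) :
  sphere_domain m Omega ->
  C1_on m Omega rho g ->
  proper_map m Omega (phi_map m rho g) ->
  forall (t : R) (gt : Vec -> Vec),
    is_gradient_on m Omega (fun x => rho x + t) gt ->
    proper_map m Omega (phi_map m (fun x => rho x + t) gt).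
Proof.
  intros [Hsph [_ [Hopen _]]] [Hg Hgc] Hprop t gt Hgt K HKhyp HK.
  set (phit := phi_map m (fun x => rho x + t) g).
  assert (Hphit : forall x, Omega x -> phi_map m (fun x => rho x + t) gt x = phit x)
    by (intros x Ox; unfold phit, phi_map; rewrite (gradient_shift_eq m Omega rho t g gt); auto).
  apply (compact_ext _ (fun x => Omega x /\ K (phit x))).
  { intros x. split; intros [Ox Kx]; split; auto; [rewrite Hphit|rewrite <- Hphit]; auto. }
  destruct (compact_bounded _ _ HK) as [M HM].
  set (K' := fun z => hyp m z /\ z 0%nat <= (exp t + exp (- t)) * M).
  apply (closed_subset _ _ (fun x => Omega x /\ K' (phi_map m rho g x))).
  - apply Hprop; [intros z [Hz _]; auto|apply hyp_sublevel_compact].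
  - intros x [Ox Kx]. destruct (Hg x Ox) as [_ [Tx _]].
    split; [auto|split; [apply phi_map_hyp; auto|]].
    eapply Rle_trans; [apply phi_map_0_shift_le|].
    apply Rmult_le_compat_l; [pose proof (exp_pos t); pose proof (exp_pos (- t)); lra|].
    eapply Rle_trans; [apply Rle_abs|]. eapply Rle_trans; [|apply (HM _ Kx)].
    apply coord_le_normn. lia.
  - apply (preimage_rel_closed (S m) (S (S m)));
      [tauto| |apply phi_map_in_Rn|intros z Kz; apply HKhyp, Kz|auto].
    intros x Ox. apply phi_map_cont_at; auto.
    apply cont_add; [apply (gradient_cont_at m Omega rho g); auto|apply cont_const].
Qed.
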